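(* Let $n\ge 2$ and $1\le m\le n-1$ be integers, and let $\alpha=(\alpha_0,\dots,\alpha_m)$ and $\beta=(\beta_0,\dots,\beta_m)$ be sequences of complex numbers. Let $A = T^{(\alpha,m)} - G^{(\alpha,m)}$ and $B = T^{(\beta,m)} - G^{(\beta,m)}$, where $T^{(\xi,m)}$ and $G^{(\xi,m)}$ are the $n\times n$ matrices defined in the context. Assume that $B$ is invertible. Set $h = \frac{1}{n+1/2}$ and, for $j=1,\dots,n$, $$\lambda_j = \frac{\alpha_0 + 2\sum_{l=1}^{m}\alpha_l\cos(l j\pi h)}{\beta_0 + 2\sum_{l=1}^{m}\beta_l\cos(l j\pi h)},\qquad \boldsymbol{x}_j=(x_{j,1},\dots,x_{j,n})^T,\quad x_{j,k} = C\sin\!\big(j\pi(n-k+1/2)h\big),\ k=1,\dots,n,$$ where $C\neq 0$ is a constant. Then for every $j=1,\dots,n$, $(\lambda_j,\boldsymbol{x}_j)$ is an eigenpair of the generalised matrix eigenvalue problem $A\boldsymbol{x}=\lambda B\boldsymbol{x}$, i.e. $A\boldsymbol{x}_j=\lambda_j B\boldsymbol{x}_j$.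
   Context: For a sequence $\xi=(\xi_0,\xi_1,\dots,\xi_m)$ of complex numbers and $m\le n-1$, $T^{(\xi,m)}\in\mathbb{C}^{n\times n}$ is the symmetric banded Toeplitz matrix with entries $T^{(\xi,m)}_{j,j+k}=\xi_{|k|}$ if $|k|\le m$ (for all $j$ and integers $k$ with $1\le j, j+k\le n$) and all other entries $0$. $H^{(\xi,m)}\in\mathbb{C}^{n\times n}$ is the matrix with entries $H^{(\xi,m)}_{j,k}=\xi_{j+k-1}$ for $j=1,\dots,m$, $k=1,\dots,m-j+1$; $H^{(\xi,m)}_{n-j+1,\,n-k+1}=\xi_{j+k}$ for $j=1,\dots,m-1$, $k=1,\dots,m-j$; and all other entries $0$. $G^{(\xi,m)}$ is the anti-diagonal transpose (flip across the anti-diagonal) of $H^{(\xi,m)}$, i.e. $G^{(\xi,m)}_{j,k}=H^{(\xi,m)}_{n+1-k,\,n+1-j}$ for all $j,k=1,\dots,n$. *)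

From HB Require Import structures.
From mathcomp Require Import all_boot all_order all_algebra.
From mathcomp Require Import complex.
From mathcomp Require Import all_classical all_reals all_analysis.
Set Implicit Arguments. Unset Strict Implicit. Unset Printing Implicit Defensive.
Import Order.TTheory GRing.Theory Num.Theory.
Local Open Scope ring_scope.

(* Matrices are 0-indexed in MathComp: the paper's row/column index j (1-based)
   corresponds to the ordinal i with val i = j - 1. *)

Definition toepT (F : nzRingType) (n m : nat) (xi : nat -> F) : 'M[F]_n :=
  \matrix_(i < n, l < n)
    let d := (subn i l + subn l i)%N in if (d <= m)%N then xi d else 0.

(* H^(xi,m): (1-based) H_{j,k} = xi_{j+k-1} for j = 1..m, k = 1..m-j+1;
   H_{n-j+1,n-k+1} = xi_{j+k} for j = 1..m-1, k = 1..m-j; 0 elsewhere.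
   With 0-based i = j-1, l = k-1 the first block is i + l + 1 <= m (value
   xi_(i+l+1)); with 0-based r = n-j, c = n-k the second block is
   (n-r)+(n-c) <= m (value xi_((n-r)+(n-c))).  The two blocks are disjoint
   when m <= n-1. *)
Definition hankH (F : nzRingType) (n m : nat) (xi : nat -> F) : 'M[F]_n :=
  \matrix_(i < n, l < n)
    let s1 := (i + l + 1)%N in
    let s2 := (subn n i + subn n l)%N in
    if (s1 <= m)%N then xi s1
    else if (s2 <= m)%N then xi s2
    else 0.

Definition hankG (F : nzRingType) (n m : nat) (xi : nat -> F) : 'M[F]_n :=
  \matrix_(i < n, l < n) hankH n m xi (rev_ord l) (rev_ord i).

Definition RtoC (R : rcfType) (x : R) : R[i] := Complex x 0.

Definition symb (R : realType) (m : nat) (xi : nat -> R[i]) (h : R) (j : nat) : R[i] :=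
  xi 0%N + 2%:R * \sum_(1 <= l < m.+1) xi l * RtoC (cos (l%:R * j%:R * pi * h)).

From mathcomp Require Import all_boot all_order all_algebra.
From mathcomp Require Import complex.
From mathcomp Require Import all_classical all_reals all_analysis.
From mathcomp Require Import zify ring.

(* Extend the eigenvector to the integer sequence y_r = sin (theta (n - 1/2 - r)),
   theta = 2 pi j / (2n + 1).  It is antisymmetric about r = n - 1/2 and, since
   theta (2n + 1) is a multiple of 2 pi, also about r = -1.  The Hankel part G of
   T - G folds exactly the entries of the band stencil that leave 0..n-1 back
   along these two reflections, so row i of (T - G) y is the full stencil
   xi_0 y_i + sum_d xi_d (y_(i+d) + y_(i-d)) = (xi_0 + 2 sum_d xi_d cos (d theta)) y_i.
   Hence y is a common eigenvector of A and B, with the symbols as eigenvalues. *)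

Set Implicit Arguments.
Unset Strict Implicit.
Unset Printing Implicit Defensive.

Import Order.TTheory GRing.Theory Num.Theory.
Local Open Scope ring_scope.

Definition band_symbol (F : nzRingType) (m : nat) (a c : nat -> F) : F :=
  a 0%N + 2%:R * \sum_(1 <= d < m.+1) a d * c d.

Section ReflectedToeplitz.
Variables (F : comNzRingType) (n m : nat) (a : nat -> F).

Lemma toepT_sum (i l : 'I_n) :
  toepT n m a i l = \sum_(d < m.+1 | d == (i - l + (l - i))%N :> nat) a d.
Proof. by rewrite mxE big_ord1_eq. Qed.

Hypothesis m_le_n : (m <= n)%N.

Lemma hankG_sum (i l : 'I_n) :
  hankG n m a i l = \sum_(d < m.+1 | d == (n + n - (i + l).+1)%N :> nat) a d
                  + \sum_(d < m.+1 | d == (i + l).+2 :> nat) a d.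
Proof.
rewrite !mxE !big_ord1_eq /= !ltnS.
have lt_in := ltn_ord i; have lt_ln := ltn_ord l.
have -> : (n - l.+1 + (n - i.+1) + 1 = n + n - (i + l).+1)%N by lia.
have -> : (n - (n - l.+1) + (n - (n - i.+1)) = (i + l).+2)%N by lia.
case: ifP => [s1_le|_]; last by rewrite add0r.
have -> : ((i + l).+2 <= m)%N = false by lia.
by rewrite addr0.
Qed.

Lemma sum_band_exchange (M : nat) (f : 'I_n -> nat) (v : 'I_n -> F) :
  \sum_(l < n) (\sum_(d < M | d == f l :> nat) a d) * v l =
  \sum_(d < M) a d * \sum_(l < n | d == f l :> nat) v l.
Proof.
under eq_bigr do rewrite mulr_suml.
rewrite (exchange_big_dep predT) //=.
by apply: eq_bigr => d _; rewrite mulr_sumr.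
Qed.

Variable y : int -> F.
Hypothesis y_antisym_low : forall r, y (-2 - r) = - y r.
Hypothesis y_antisym_high : forall r, y (n%:Z *+ 2 - 1 - r) = - y r.

Lemma sum_dist0 (i : 'I_n) : \sum_(l < n | 0 == (i - l + (l - i))%N :> nat) y l = y i.
Proof.
rewrite (eq_bigl (fun l : 'I_n => nat_of_ord l == i)) => [|l]; last by apply/eqP/eqP; lia.
by rewrite (big_ord1_eq _ (fun k : nat => y k)) ltn_ord.
Qed.

Lemma sum_dist (i : 'I_n) d : (0 < d)%N ->
  \sum_(l < n | d == (i - l + (l - i))%N :> nat) y l =
  (if (i + d < n)%N then y (i%:Z + d%:Z) else 0) +
  (if (d <= i)%N then y (i%:Z - d%:Z) else 0).
Proof.
move=> d_gt0; rewrite (bigID (fun l : 'I_n => i <= l)%N) /=; congr (_ + _).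
  rewrite (eq_bigl (fun l : 'I_n => nat_of_ord l == i + d)%N) => [|l]; last first.
    by apply/idP/idP; [case/andP => /eqP + ? | move=> /eqP ?]; lia.
  by rewrite (big_ord1_eq _ (fun k : nat => y k)) PoszD.
rewrite (eq_bigl (fun l : 'I_n => (d <= i) && (nat_of_ord l == i - d))%N) => [|l]; last first.
  by apply/idP/idP; [case/andP => /eqP + ? | case/andP => ? /eqP ?]; lia.
rewrite (big_ord1_cond_eq _ (fun k : nat => y k) (fun=> d <= i)%N).
have -> /= : (i - d < n)%N by have := ltn_ord i; lia.
by case: leqP => // le_di; congr y; lia.
Qed.

Lemma sum_reflect_high (i : 'I_n) d : (d <= n)%N ->
  \sum_(l < n | d == (n + n - (i + l).+1)%N :> nat) y l =
  if (n <= i + d)%N then - y (i%:Z + d%:Z) else 0.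
Proof.
move=> le_dn; have lt_in := ltn_ord i.
rewrite (eq_bigl (fun l : 'I_n => nat_of_ord l == n + n - (i + d).+1)%N) => [|l]; last first.
  by move: (ltn_ord l) => ?; apply/eqP/eqP; lia.
rewrite (big_ord1_eq _ (fun k : nat => y k)); case: (leqP n (i + d)) => [le_n_id|lt_id_n].
  have -> : (n + n - (i + d).+1 < n)%N by lia.
  by rewrite -y_antisym_high; congr y; lia.
by have -> : (n + n - (i + d).+1 < n)%N = false by lia.
Qed.

Lemma sum_reflect_low (i : 'I_n) d : (d <= n)%N ->
  \sum_(l < n | d == (i + l).+2 :> nat) y l =
  if (i.+2 <= d)%N then - y (i%:Z - d%:Z) else 0.
Proof.
move=> le_dn; have lt_in := ltn_ord i.
rewrite (eq_bigl (fun l : 'I_n => (i.+2 <= d) && (nat_of_ord l == d - i.+2))%N) => [|l].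
  rewrite (big_ord1_cond_eq _ (fun k : nat => y k) (fun=> i.+2 <= d)%N).
  have -> /= : (d - i.+2 < n)%N by lia.
  by case: leqP => // le_i2d; rewrite -y_antisym_low; congr y; lia.
by apply/idP/idP; [move=> /eqP ? | case/andP => ? /eqP ?]; lia.
Qed.

(* Implied by y_antisym_low unless F has characteristic 2. *)
Hypothesis y_center : y (-1) = 0.

Lemma sum_dist_reflected (i : 'I_n) d : (0 < d <= n)%N ->
  \sum_(l < n | d == (i - l + (l - i))%N :> nat) y l
  - (\sum_(l < n | d == (n + n - (i + l).+1)%N :> nat) y l
     + \sum_(l < n | d == (i + l).+2 :> nat) y l) =
  y (i%:Z + d%:Z) + y (i%:Z - d%:Z).
Proof.
move=> /andP[d_gt0 le_dn].
rewrite sum_dist // sum_reflect_high // sum_reflect_low // -[(d <= i)%N]ltnS.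
have y_center_i : y (i%:Z - i.+1%:Z) = 0 by rewrite -y_center; congr y; lia.
have [lt_idn|le_nid] := ltnP (i + d) n; have [lt_di|lt_id|->] := ltngtP d i.+1.
all: rewrite ?y_center_i; ring.
Qed.

Lemma toepT_mulmx_col : toepT n m a *m \col_(k < n) y k =
  \col_(i < n) \sum_(d < m.+1) a d * \sum_(l < n | d == (i - l + (l - i))%N :> nat) y l.
Proof.
apply/matrixP => i k; rewrite mxE [RHS]mxE.
under eq_bigr => l _ do rewrite toepT_sum mxE.
exact: sum_band_exchange.
Qed.

Lemma hankG_mulmx_col : hankG n m a *m \col_(k < n) y k =
  \col_(i < n) \sum_(d < m.+1) a d *
     (\sum_(l < n | d == (n + n - (i + l).+1)%N :> nat) y l
      + \sum_(l < n | d == (i + l).+2 :> nat) y l).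
Proof.
apply/matrixP => i k; rewrite mxE [RHS]mxE.
under eq_bigr => l _ do rewrite hankG_sum mxE mulrDl.
rewrite big_split /= !sum_band_exchange -big_split /=.
by under eq_bigr do rewrite -mulrDr.
Qed.

Variable c : nat -> F.
Hypothesis y_shift : forall (r : int) (d : nat), y (r + d%:Z) + y (r - d%:Z) = 2 * c d * y r.

Lemma reflected_toeplitz_col_eigen :
  (toepT n m a - hankG n m a) *m \col_(k < n) y k = band_symbol m a c *: \col_(k < n) y k.
Proof.
rewrite mulmxBl toepT_mulmx_col hankG_mulmx_col; apply/matrixP => i k; rewrite !mxE.
rewrite -sumrB; under eq_bigr do rewrite -mulrBr.
rewrite big_ord_recl /= sum_dist0 sum_reflect_high // sum_reflect_low //.
rewrite addn0 leqNgt ltn_ord addr0 subr0.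
under eq_bigr => d _.
  rewrite sum_dist_reflected ?y_shift; last by rewrite /bump /=; have := ltn_ord d; lia.
  over.
rewrite /band_symbol big_add1 big_mkord mulrDl mulr_sumr mulr_suml; congr (_ + _).
by apply: eq_bigr => d _; rewrite /bump /=; ring.
Qed.

End ReflectedToeplitz.

Lemma symb_band_symbol (R : realType) (m : nat) (xi : nat -> R[i]) (h : R) (j : nat) :
  symb m xi h j = band_symbol m xi (fun d => RtoC (cos (d%:R * j%:R * pi * h))).
Proof. by []. Qed.

Section SineMode.
Variables (R : realType) (n j : nat) (K : R[i]).

Let h : R := (n%:R + 2^-1)^-1.
Let theta : R := j%:R * pi * h.

Definition sine_mode (r : int) : R[i] := K * RtoC (sin (theta * (n%:R - 2^-1 - r%:~R))).

Lemma RtoC_real (x : R) : RtoC x = real_complex R x.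
Proof. by []. Qed.

Lemma sine_mode_nat (k : nat) : (k < n)%N ->
  K * RtoC (sin (j%:R * pi * ((n - k.+1)%:R + 2^-1) * h)) = sine_mode k.
Proof.
move=> lt_kn; rewrite /sine_mode /theta natrB // -addn1 natrD.
by congr (_ * RtoC (sin _)); field.
Qed.

Lemma sine_mode_antisym_high r : sine_mode (n%:Z *+ 2 - 1 - r) = - sine_mode r.
Proof.
rewrite /sine_mode !RtoC_real -mulrN; congr (_ * _).
rewrite -[RHS]rmorphN -sinN; congr (real_complex R (sin _)).
rewrite !intrB rmorphMn ?rmorph1.
by field.
Qed.

Lemma sine_mode_antisym_low r : sine_mode (-2 - r) = - sine_mode r.
Proof.
have n_half_neq0 : n%:R + 2^-1 != 0 :> R.
  apply: lt0r_neq0; apply: ltr_wpDl; [exact: ler0n | by rewrite invr_gt0 ltr0n].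
have period : theta * (n%:R + 2^-1) *+ 2 = pi *+ 2 *+ j.
  by rewrite /theta /h; field.
rewrite /sine_mode !RtoC_real -mulrN; congr (_ * _).
rewrite -[RHS]rmorphN -sinN -[in RHS](periodicn (@sinD2pi R) j) -period.
congr (real_complex R (sin _)); rewrite intrB.
by field.
Qed.

Lemma sine_mode_center : sine_mode (-1) = 0.
Proof.
have := sine_mode_antisym_low (-1); rewrite (_ : -2 - -1 = -1) // => /eqP.
by rewrite -addr_eq0 -mulr2n mulrn_eq0 /= => /eqP.
Qed.

Lemma sine_mode_shift (r : int) (d : nat) :
  sine_mode (r + d%:Z) + sine_mode (r - d%:Z) =
  2 * RtoC (cos (d%:R * j%:R * pi * h)) * sine_mode r.
Proof.
set u := theta * (n%:R - 2^-1 - r%:~R).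
have sin_sum : sin (theta * (n%:R - 2^-1 - (r + d%:Z)%:~R))
             + sin (theta * (n%:R - 2^-1 - (r - d%:Z)%:~R))
             = 2 * cos (d%:R * j%:R * pi * h) * sin u.
  have -> : d%:R * j%:R * pi * h = d%:R * theta by rewrite /theta !mulrA.
  rewrite intrD intrB.
  have -> : theta * (n%:R - 2^-1 - (r%:~R + d%:~R)) = u - d%:R * theta by rewrite /u; ring.
  have -> : theta * (n%:R - 2^-1 - (r%:~R - d%:~R)) = u + d%:R * theta by rewrite /u; ring.
  by rewrite sinB sinD; ring.
rewrite /sine_mode !RtoC_real -mulrDr -rmorphD sin_sum !rmorphM rmorph_nat.
by rewrite -/u; ring.
Qed.

Lemma reflected_toeplitz_sine_mode (m : nat) (a : nat -> R[i]) : (m <= n)%N ->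
  (toepT n m a - hankG n m a) *m \col_(k < n) sine_mode k =
  band_symbol m a (fun d => RtoC (cos (d%:R * j%:R * pi * h))) *: \col_(k < n) sine_mode k.
Proof.
move=> m_le_n; apply: reflected_toeplitz_col_eigen => //.
- exact: sine_mode_antisym_low.
- exact: sine_mode_antisym_high.
- exact: sine_mode_center.
- exact: sine_mode_shift.
Qed.

End SineMode.

Lemma mulmx_pencil_eigen (F : fieldType) (n : nat) (A B : 'M[F]_n) (x : 'cV[F]_n) (a b : F) :
  B \in unitmx -> A *m x = a *: x -> B *m x = b *: x -> A *m x = (a / b) *: (B *m x).
Proof.
move=> B_unit Ax Bx; rewrite Ax Bx scalerA.
(* If b = 0 then x = 0, so the junk value a / 0 = 0 is harmless. *)
have [b0|b_neq0] := eqVneq b 0; last by rewrite divfK.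
have -> : x = 0 by rewrite -(mulKmx B_unit x) Bx b0 scale0r mulmx0.
by rewrite !scaler0.
Qed.

Theorem mainTheorem2 (R : realType) (n m : nat) (alpha beta : nat -> R[i])
  (Cc : R[i]) (j : nat) :
  (2 <= n)%N -> (1 <= m)%N -> (m <= n - 1)%N ->
  (toepT n m beta - hankG n m beta) \in unitmx ->
  Cc != 0 ->
  (1 <= j <= n)%N ->
  let A := toepT n m alpha - hankG n m alpha in
  let B := toepT n m beta - hankG n m beta in
  let h : R := (n%:R + 2%:R^-1)^-1 in
  let lambda := symb m alpha h j / symb m beta h j in
  let x : 'cV[R[i]]_n :=
    \col_(k < n) (Cc * RtoC (sin (j%:R * pi * ((subn n k.+1)%:R + 2%:R^-1) * h))) in
  A *m x = lambda *: (B *m x).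
Proof.
move=> _ _ m_le B_unit _ _ A B h lambda x.
have x_mode : x = \col_(k < n) sine_mode n j Cc k.
  by apply/matrixP => k l; rewrite !mxE sine_mode_nat.
have m_le_n : (m <= n)%N by rewrite (leq_trans m_le) ?leq_subr.
rewrite x_mode /lambda; apply: (mulmx_pencil_eigen B_unit); rewrite symb_band_symbol.
all: exact: reflected_toeplitz_sine_mode.
Qed.
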